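(* Let $C$ be a $k$-context of the call-by-value $\lambda$-calculus and $V_1,\dots,V_k$ values. Then $$\mathcal{T}(C[V_1,\dots,V_k])=\big\{\tilde c[\vec v^{\,1},\dots,\vec v^{\,k}]\ \big|\ c\in\mathcal{T}(C),\ \tilde c\text{ a rigid of }c,\ \vec v^{\,i}=\langle v^i_1,\dots,v^i_{\deg_{\Box_i}(c)}\rangle \text{ with } [v^i_1,\dots,v^i_{\deg_{\Box_i}(c)}]\in\mathcal{T}(V_i)\text{ for all } i\big\}.$$
   Context: CbV $\lambda$-terms are ordinary $\lambda$-terms $M::=x\mid \lambda x.M\mid MM$; values are variables and abstractions. A $k$-context $C$ is a $\lambda$-term possibly containing holes $\Box_1,\dots,\Box_k$ (each any number of times); $C[M_1,\dots,M_k]$ denotes filling $\Box_i$ with $M_i$ (variable capture allowed). Resource CbV terms: resource values $v::=x\mid \lambda x.s$ and resource simple terms $s::= s_1s_2\mid [v_1,\dots,v_n]$ ($n\ge 0$, brackets denote finite multisets, ''bags''), up to $\alpha$-equivalence. Resource $k$-contexts: $c^v::=\Box_1\mid\dots\mid\Box_k\mid x\mid \lambda x.c^s$, $c^s::=c^s_1c^s_2\mid[c^v_1,\dots,c^v_n]$. $\deg_{\Box_i}(c)$ is the number of occurrences of $\Box_i$ in $c$. Taylor expansion: $\mathcal{T}(x)=\{[x,\dots,x]\ (n \text{ copies})\mid n\in\mathbb N\}$, $\mathcal{T}(\Box_i)=\{[\Box_i,\dots,\Box_i]\ (n\text{ copies})\mid n\in\mathbb N\}$, $\mathcal{T}(\lambda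 x.M)=\{[\lambda x.s_1,\dots,\lambda x.s_n]\mid n\in\mathbb N,\ s_j\in\mathcal{T}(M)\}$, $\mathcal{T}(M_1M_2)=\{s_1s_2\mid s_j\in\mathcal{T}(M_j)\}$. Rigids of a resource context $c$ (ordered-list versions): $\mathrm{Rigid}(\Box_i)=\{\Box_i\}$, $\mathrm{Rigid}(x)=\{x\}$, $\mathrm{Rigid}(\lambda x.c_0)=\{\lambda x.\tilde c_0\mid\tilde c_0\in\mathrm{Rigid}(c_0)\}$, $\mathrm{Rigid}(c_0c_1)=\{\tilde c_0\tilde c_1\mid \tilde c_j\in\mathrm{Rigid}(c_j)\}$, $\mathrm{Rigid}([c_1,\dots,c_n])=\{\langle\tilde c_{\sigma(1)},\dots,\tilde c_{\sigma(n)}\rangle\mid\sigma\text{ a permutation},\ \tilde c_j\in\mathrm{Rigid}(c_j)\}$. Filling a rigid $\tilde c$ of $c$ with lists $\vec v^{\,i}$ of resource values of length $\deg_{\Box_i}(c)$: for $\tilde c=\Box_i$, the result is the unique value in $\vec v^{\,i}$; for $x$ it is $x$; $(\lambda x.\tilde c_0)[\vec v^{\,1},\dots,\vec v^{\,k}]=\lambda x.\tilde c_0[\vec v^{\,1},\dots,\vec v^{\,k}]$; for $\tilde c_1\tilde c_2$, split each $\vec v^{\,i}=\vec w^{\,i1}\vec w^{\,i2}$ with $\vec w^{\,ij}$ of length $\deg_{\Box_i}(c_j)$, result $\tilde c_1[\vec w^{\,11},\dots,\vec w^{\,k1}]\,\tilde c_2[\vec w^{\,12},\dots,\vec w^{\,k2}]$;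 for $\langle\tilde c_{\sigma(1)},\dots,\tilde c_{\sigma(n)}\rangle$, split $\vec v^{\,i}=\vec w^{\,i1}\cdots\vec w^{\,in}$ with $\vec w^{\,ij}$ of length $\deg_{\Box_i}(c_{\sigma(j)})$, result the bag $[\tilde c_{\sigma(1)}[\vec w^{\,11},\dots,\vec w^{\,k1}],\dots,\tilde c_{\sigma(n)}[\vec w^{\,1n},\dots,\vec w^{\,kn}]]$. *)

From mathcomp Require Import all_boot.
From Stdlib Require Import Permutation.

Set Implicit Arguments.
Unset Strict Implicit.
Unset Printing Implicit Defensive.

(* (the paper's Box_1..Box_k are Hole 0 .. Hole (k-1)).  Plain        *)
(* lambda-terms are the 0-contexts [term 0].  Variables are names      *)
(* (nat); filling is plain syntactic replacement (capture allowed).   *)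
Inductive term (k : nat) : Type :=
| Var  : nat -> term k
| Hole : 'I_k -> term k
| Lam  : nat -> term k -> term k
| App  : term k -> term k -> term k.

Arguments Var {k} _.
Arguments Hole {k} _.
Arguments Lam {k} _ _.
Arguments App {k} _ _.

Definition is_value (M : term 0) : Prop :=
  match M with Var _ | Lam _ _ => True | _ => False end.

Fixpoint fill (k : nat) (C : term k) (Ms : 'I_k -> term 0) : term 0 :=
  match C with
  | Var x => Var x
  | Hole i => Ms i
  | Lam x C0 => Lam x (fill C0 Ms)
  | App C1 C2 => App (fill C1 Ms) (fill C2 Ms)
  end.

(* A bag is represented by a list; the multiset quotient is taken via  *)
(* the equivalence [req] below.  The same list syntax also represents  *)
(* rigids (ordered lists).                                             *)
Inductive rval (k : nat) : Type :=
| RVar  : nat -> rval k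
| RHole : 'I_k -> rval k
| RLam  : nat -> rterm k -> rval k
with rterm (k : nat) : Type :=
| RApp : rterm k -> rterm k -> rterm k
| RBag : list (rval k) -> rterm k.

Arguments RVar {k} _.
Arguments RHole {k} _.
Arguments RLam {k} _ _.
Arguments RApp {k} _ _.
Arguments RBag {k} _.

Inductive reqv (k : nat) : rval k -> rval k -> Prop :=
| reqv_var x : reqv (RVar x) (RVar x)
| reqv_hole i : reqv (RHole i) (RHole i)
| reqv_lam x s s' : reqs s s' -> reqv (RLam x s) (RLam x s')
with reqs (k : nat) : rterm k -> rterm k -> Prop :=
| reqs_app s1 s2 s1' s2' : reqs s1 s1' -> reqs s2 s2' ->
    reqs (RApp s1 s2) (RApp s1' s2')
| reqs_bag (l l1 l' : list (rval k)) :
    List.Forall2 (@reqv k) l l1 -> Permutation l1 l' -> reqs (RBag l) (RBag l').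

Inductive taylor (k : nat) : term k -> rterm k -> Prop :=
| taylor_var x n : taylor (Var x) (RBag (nseq n (RVar x)))
| taylor_hole i n : taylor (Hole i) (RBag (nseq n (RHole i)))
| taylor_lam x M (ss : list (rterm k)) :
    (forall s, List.In s ss -> taylor M s) ->
    taylor (Lam x M) (RBag (map (RLam x) ss))
| taylor_app M1 M2 s1 s2 : taylor M1 s1 -> taylor M2 s2 ->
    taylor (App M1 M2) (RApp s1 s2).

Definition inT (k : nat) (M : term k) (s : rterm k) : Prop :=
  exists s', taylor M s' /\ reqs s s'.

(* Rigids: rigid c ct  means  ct \in Rigid(c). *)
Inductive rigidv (k : nat) : rval k -> rval k -> Prop :=
| rigidv_var x : rigidv (RVar x) (RVar x)
| rigidv_hole i : rigidv (RHole i) (RHole i)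
| rigidv_lam x c ct : rigids c ct -> rigidv (RLam x c) (RLam x ct)
with rigids (k : nat) : rterm k -> rterm k -> Prop :=
| rigids_app c1 c2 ct1 ct2 : rigids c1 ct1 -> rigids c2 ct2 ->
    rigids (RApp c1 c2) (RApp ct1 ct2)
| rigids_bag (l lt lts : list (rval k)) :
    List.Forall2 (@rigidv k) l lt -> Permutation lt lts ->
    rigids (RBag l) (RBag lts).

Fixpoint degv (k : nat) (i : 'I_k) (v : rval k) : nat :=
  match v with
  | RVar _ => 0
  | RHole j => (i == j : nat)
  | RLam _ s => degs i s
  end
with degs (k : nat) (i : 'I_k) (s : rterm k) : nat :=
  match s with
  | RApp s1 s2 => degs i s1 + degs i s2
  | RBag l => (fix go (l : list (rval k)) : nat :=
                 match l with nil => 0 | v :: l' => degv i v + go l' end) l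
  end.

Definition dummy_rval : rval 0 := RVar 0.

(* Filling a rigid ct with lists vs i of resource values (of length
   deg_{Box_i}(ct)); lists are split consecutively as in the paper. *)
Fixpoint fillv (k : nat) (v : rval k) (vs : 'I_k -> list (rval 0)) : rval 0 :=
  match v with
  | RVar x => RVar x
  | RHole i => head dummy_rval (vs i)
  | RLam x s => RLam x (fills s vs)
  end
with fills (k : nat) (s : rterm k) (vs : 'I_k -> list (rval 0)) : rterm 0 :=
  match s with
  | RApp s1 s2 =>
      RApp (fills s1 (fun i => take (degs i s1) (vs i)))
           (fills s2 (fun i => drop (degs i s1) (vs i)))
  | RBag l =>
      RBag ((fix go (l : list (rval k)) (vs : 'I_k -> list (rval 0))
               : list (rval 0) :=
               match l with
               | nil => nil
               | v :: l' => fillv v (fun i => take (degv i v) (vs i))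
                            :: go l' (fun i => drop (degv i v) (vs i))
               end) l vs)
  end.

(* For a value V, T(V) consists of all finite bags drawn from a fixed set of
   resource values (inT_bagE), so the elements plugged into the occurrences of
   the holes of an expansion can be chosen independently of each other.
   Hence an element of T(C[V]) is an element c of T(C) whose hole occurrences,
   read in the order in which [fills] consumes them, are filled by elements of
   bags in the T(V_i): c itself serves as the rigid.  Conversely a rigid of c
   only reorders bags, and the expansion of an abstraction is an arbitrary
   list of expansions of its body, so the reordering can be absorbed into the
   choice of c; filling any rigid thus lands in T(C[V]) up to bag equality. *)

From mathcomp Require Import all_boot.
From Stdlib Require Import Permutation.

Set Implicit Arguments.
Unset Strict Implicit.
Unset Printing Implicit Defensive.

Lemma Forall2_trans_Forall A (R : A -> A -> Prop) (l l1 l2 : list A) :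
  List.Forall (fun a => forall b c, R a b -> R b c -> R a c) l ->
  List.Forall2 R l l1 -> List.Forall2 R l1 l2 -> List.Forall2 R l l2.
Proof.
move=> H H1; elim: H1 l2 H => [|a b l' l1' Hab _ IH] l2 H H2; first by inversion H2.
inversion H2 as [|b' c l1'' l2' Hbc Hr]; subst.
inversion H as [|a' l0 Ha Hl]; subst.
by constructor; [exact: Ha Hab Hbc | exact: IH].
Qed.

Lemma map_List_map A B (f : A -> B) l : map f l = List.map f l.
Proof. by elim: l => //= a l ->. Qed.

Section ResourceTerms.
Variable k : nat.

Section Induction.
Variables (P : rterm k -> Prop) (Q : rval k -> Prop).
Hypothesis HVar : forall x, Q (RVar x).
Hypothesis HHole : forall i, Q (RHole i).
Hypothesis HLam : forall x s, P s -> Q (RLam x s).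
Hypothesis HApp : forall s1 s2, P s1 -> P s2 -> P (RApp s1 s2).
Hypothesis HBag : forall l, List.Forall Q l -> P (RBag l).

Fixpoint rterm_rval_ind (s : rterm k) : P s :=
  match s with
  | RApp s1 s2 => HApp (rterm_rval_ind s1) (rterm_rval_ind s2)
  | RBag l => HBag ((fix go (l : list (rval k)) : List.Forall Q l :=
                      match l with
                      | nil => List.Forall_nil Q
                      | v :: l' => List.Forall_cons v (rval_rterm_ind v) (go l')
                      end) l)
  end
with rval_rterm_ind (v : rval k) : Q v :=
  match v with
  | RVar x => HVar x
  | RHole i => HHole i
  | RLam x s => HLam x (rterm_rval_ind s)
  end.

End Induction.

Fixpoint degsl (i : 'I_k) (l : list (rval k)) : nat :=
  if l is v :: l' then degv i v + degsl i l' else 0.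

Fixpoint fillsl (l : list (rval k)) (vs : 'I_k -> list (rval 0)) : list (rval 0) :=
  if l is v :: l' then
    fillv v (fun i => take (degv i v) (vs i))
      :: fillsl l' (fun i => drop (degv i v) (vs i))
  else nil.

Lemma degs_bag (i : 'I_k) l : degs i (RBag l) = degsl i l.
Proof. by elim: l => //= v l ->. Qed.

Lemma fills_bag (l : list (rval k)) vs : fills (RBag l) vs = RBag (fillsl l vs).
Proof.
by elim: l vs => //= v l IH vs; case: (IH (fun i => drop (degv i v) (vs i))) => ->.
Qed.

Lemma degs_nseq (i : 'I_k) n v : degs i (RBag (nseq n v)) = n * degv i v.
Proof. by rewrite degs_bag; elim: n => //= n ->; rewrite mulSn. Qed.

Lemma degsl_perm (i : 'I_k) l l' : Permutation l l' -> degsl i l = degsl i l'.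
Proof.
elim => //= [v l1 l2 _ -> | v w l1 | l1 l2 l3 _ -> _ ->] //.
by rewrite addnCA.
Qed.

Lemma fills_nseq_var n x vs :
  fills (RBag (nseq n (@RVar k x))) vs = RBag (nseq n (RVar x)).
Proof. by rewrite fills_bag; congr RBag; elim: n vs => //= n IH vs; rewrite IH. Qed.

Lemma fills_nseq_hole n (i : 'I_k) vs : n <= size (vs i) ->
  fills (RBag (nseq n (RHole i))) vs = RBag (take n (vs i)).
Proof.
rewrite fills_bag => Hn; congr RBag; elim: n vs Hn => [|n IH] vs; first by rewrite take0.
case E: (vs i) => [|w l] //= Hn.
by rewrite eqxx E /= IH /= E eqxx /= ?drop0.
Qed.

Lemma eq_fills (s : rterm k) vs vs' : vs =1 vs' -> fills s vs = fills s vs'.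
Proof.
move: s vs vs'.
apply: (rterm_rval_ind
  (Q := fun v => forall vs vs', vs =1 vs' -> fillv v vs = fillv v vs')).
- by [].
- by move=> i vs vs' /= ->.
- by move=> x s IH vs vs' E /=; rewrite (IH vs vs').
- move=> s1 s2 IH1 IH2 vs vs' E /=.
  rewrite (IH1 _ (fun i => take (degs i s1) (vs' i))) => [|i]; last by rewrite E.
  by rewrite (IH2 _ (fun i => drop (degs i s1) (vs' i))) // => i; rewrite E.
- move=> l IH vs vs' E; rewrite !fills_bag; congr RBag.
  elim: IH vs vs' E => //= v l' Hv _ IHl vs vs' E.
  rewrite (Hv _ (fun i => take (degv i v) (vs' i))) => [|i]; last by rewrite E.
  by rewrite (IHl _ (fun i => drop (degv i v) (vs' i))) // => i; rewrite E.
Qed.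

Lemma fills_app_cat (s1 s2 : rterm k) vs1 vs2 : (forall i, size (vs1 i) = degs i s1) ->
  fills (RApp s1 s2) (fun i => vs1 i ++ vs2 i) = RApp (fills s1 vs1) (fills s2 vs2).
Proof.
move=> Hs /=; rewrite (eq_fills s1 (vs' := vs1)) ?(eq_fills s2 (vs' := vs2)) // => i.
  by rewrite drop_size_cat.
by rewrite take_size_cat.
Qed.

Lemma fillsl_lam_cat x (s : rterm k) l vs1 vs2 : (forall i, size (vs1 i) = degs i s) ->
  fillsl (RLam x s :: l) (fun i => vs1 i ++ vs2 i) = RLam x (fills s vs1) :: fillsl l vs2.
Proof.
move=> Hs /=; rewrite (eq_fills s (vs' := vs1)).
  have : fills (RBag l) (fun i => drop (degs i s) (vs1 i ++ vs2 i)) = fills (RBag l) vs2.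
    by apply: eq_fills => i; rewrite drop_size_cat.
  by rewrite !fills_bag => -[->].
by move=> i; rewrite take_size_cat.
Qed.

Lemma reqs_refl (s : rterm k) : reqs s s.
Proof.
move: s; apply: (rterm_rval_ind (Q := fun v => reqv v v)); try by constructor.
move=> l H; apply: (reqs_bag (l1 := l)) => //.
by elim: H => *; constructor.
Qed.

Lemma reqs_trans (s1 s2 s3 : rterm k) : reqs s1 s2 -> reqs s2 s3 -> reqs s1 s3.
Proof.
move: s1 s2 s3; apply: (rterm_rval_ind
  (Q := fun v => forall v' v'', reqv v v' -> reqv v' v'' -> reqv v v'')).
- by move=> x v' v'' H1 H2; inversion H1; subst; inversion H2.
- by move=> i v' v'' H1 H2; inversion H1; subst; inversion H2.
- move=> x s IH v' v'' H1 H2.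
  inversion H1 as [| |x0 s0 s0' Hs]; subst; inversion H2 as [| |x1 s1 s1' Hs']; subst.
  by constructor; exact: IH Hs Hs'.
- move=> s1 s2 IH1 IH2 s' s'' H1 H2.
  inversion H1 as [a1 a2 b1 b2 Ha1 Ha2|]; subst.
  inversion H2 as [c1 c2 d1 d2 Hc1 Hc2|]; subst.
  by constructor; [exact: IH1 Ha1 Hc1 | exact: IH2 Ha2 Hc2].
- move=> l IH s' s'' H1 H2.
  inversion H1 as [|l0 l1 l' F1 P1]; subst.
  inversion H2 as [|l2 l3 l'' F2 P2]; subst.
  (* commute the first permutation with the second pointwise comparison *)
  have [l4 [P3 F3]] := Permutation_Forall2 (Permutation_sym P1) F2.
  apply: (reqs_bag (l1 := l4)); first exact: Forall2_trans_Forall IH F1 F3.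
  exact: Permutation_trans (Permutation_sym P3) P2.
Qed.

Lemma rigids_refl (s : rterm k) : rigids s s.
Proof.
move: s; apply: (rterm_rval_ind (Q := fun v => rigidv v v)); try by constructor.
move=> l H; apply: (rigids_bag (lt := l)) => //.
by elim: H => *; constructor.
Qed.

Lemma degs_rigids (c ct : rterm k) i : rigids c ct -> degs i c = degs i ct.
Proof.
move: c ct; apply: (rterm_rval_ind
  (Q := fun v => forall vt, rigidv v vt -> degv i v = degv i vt)).
- by move=> x vt H; inversion H.
- by move=> j vt H; inversion H.
- by move=> x s IH vt H; inversion H; subst; exact: IH.
- move=> s1 s2 IH1 IH2 ct H; inversion H as [a1 a2 b1 b2 H1 H2|]; subst => /=.
  by rewrite (IH1 _ H1) (IH2 _ H2).
- move=> l IH ct H; inversion H as [|l0 lt lts F P]; subst.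
  rewrite !degs_bag -(degsl_perm i P).
  elim: F IH => //= a b l1 l2 Hab _ IHl IH; inversion IH; subst.
  by rewrite (H2 _ Hab) IHl.
Qed.

Lemma rigids_nseq n (w : rval k) ct :
  (forall w', rigidv w w' -> w' = w) ->
  rigids (RBag (nseq n w)) ct -> ct = RBag (nseq n w).
Proof.
move=> Hw H; inversion H as [|l lt lts F P]; subst.
have E : lt = nseq n w.
  elim: n lt F {H P} => [|n IH] lt F; inversion F as [|a b l1 l2 Hab Hr]; subst => //=.
  by rewrite (Hw _ Hab) (IH _ Hr).
have R : nseq n w = List.repeat w n by elim: n {H F E} => //= n ->.
by subst; rewrite R in P *; rewrite (Permutation_repeat _ _ (Permutation_sym P)).
Qed.

Lemma rigids_lam_bag x (ss : list (rterm k)) ct :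
  rigids (RBag (map (RLam x) ss)) ct ->
  exists ss' cts, [/\ Permutation ss ss', List.Forall2 (@rigids k) ss' cts
                    & ct = RBag (map (RLam x) cts)].
Proof.
move=> H; inversion H as [|l lt lts F P]; subst.
have [cts [E F']] : exists cts,
    lt = map (RLam x) cts /\ List.Forall2 (@rigids k) ss cts.
  elim: ss lt F {H P} => [|s ss IH] lt F; inversion F as [|a b l1 l2 Hab Hr]; subst.
    by exists nil; split => //; constructor.
  inversion Hab as [| |x0 c0 ct0 Hc]; subst.
  have [cts [-> F2]] := IH _ Hr.
  by exists (ct0 :: cts); split => //; constructor.
subst; have Pm : Permutation lts (List.map (RLam x) cts).
  by rewrite -map_List_map; exact: Permutation_sym P.
have [cts' [-> Pc]] := Permutation_map_inv _ _ Pm.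
have [ss' [Ps F'']] := Permutation_Forall2 Pc (List.Forall2_flip F').
by exists ss', cts'; split; [| exact: List.Forall2_flip | rewrite map_List_map].
Qed.
End ResourceTerms.

Lemma Forall_take_drop A (P : A -> Prop) n (l : seq A) :
  List.Forall P l -> List.Forall P (take n l) /\ List.Forall P (drop n l).
Proof. by rewrite -{1}(cat_take_drop n l) => /List.Forall_app. Qed.

Lemma size_take_drop_add A (l : seq A) m n :
  size l = m + n -> size (take m l) = m /\ size (drop m l) = n.
Proof. by move=> E; rewrite size_takel ?size_drop E ?addKn ?leq_addr. Qed.

Definition inTv (V : term 0) (w : rval 0) : Prop :=
  match V with
  | Var x => w = RVar x
  | Lam x M => exists s, w = RLam x s /\ inT M s
  | App _ _ | Hole _ => False
  end.

Lemma taylor_value V t : is_value V -> taylor V t ->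
  exists l, t = RBag l /\ List.Forall (inTv V) l.
Proof.
case: V => //= [x|x M] _ H.
- inversion H; subst; exists (nseq n (RVar x)); split => //.
  by elim: n {H} => *; constructor.
- inversion H as [| |x0 M0 ss Hss|]; subst; exists (map (RLam x) ss); split => //.
  elim: ss {H} Hss => [|s ss IH] Hss; constructor.
    by exists s; split => //; exists s; split; [apply: Hss; left | exact: reqs_refl].
  by apply: IH => s' Hs'; apply: Hss; right.
Qed.

Lemma inTv_reqv V w w' : reqv w w' -> inTv V w' -> inTv V w.
Proof.
case: V => //= [x|x M] H.
- by move=> E; subst; inversion H.
- move=> [s' [E [t [Ht Hr]]]]; subst; inversion H as [| |x0 s0 s1 Hs]; subst.
  by exists s0; split => //; exists t; split => //; exact: reqs_trans Hs Hr.
Qed.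

Lemma inT_bagE V l : is_value V -> inT V (RBag l) <-> List.Forall (inTv V) l.
Proof.
move=> HV; split.
  move=> [t [Ht Hr]]; have [l' [E F]] := taylor_value HV Ht; subst.
  inversion Hr as [|l0 l1 l2 F2 P2]; subst.
  have F1 := Permutation_Forall (Permutation_sym P2) F.
  elim: F2 F1 => // a b la lb Hab _ IH F1; inversion F1; subst.
  by constructor; [exact: inTv_reqv Hab _ | exact: IH].
case: V HV => //= [x|x M] _ F.
- have -> : l = nseq (size l) (RVar x) by elim: F => //= a l' -> _ {1}->.
  by exists (RBag (nseq (size l) (RVar x))); split; [constructor | exact: reqs_refl].
- have [ss [Hss F2]] : exists ss, (forall s, List.In s ss -> taylor M s) /\
      List.Forall2 (@reqv 0) l (map (RLam x) ss).
    elim: F => [|a l' [s [-> [t [Ht Hr]]]] _ [ss [Hss F2]]].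
      by exists nil; split => //; constructor.
    exists (t :: ss); split; first by move=> s0 [<-|Hs0]; [exact: Ht | exact: Hss].
    by constructor => //; constructor.
  exists (RBag (map (RLam x) ss)); split; first by constructor.
  exact: (reqs_bag (l1 := map (RLam x) ss)).
Qed.

Section FillValues.
Variables (k : nat) (V : 'I_k -> term 0).
Hypothesis HV : forall i, is_value (V i).

Definition admissible (c : rterm k) (vs : 'I_k -> list (rval 0)) : Prop :=
  forall i, size (vs i) = degs i c /\ List.Forall (inTv (V i)) (vs i).

Lemma admissible_cat (c c1 c2 : rterm k) vs1 vs2 :
  (forall i, degs i c = degs i c1 + degs i c2) ->
  admissible c1 vs1 -> admissible c2 vs2 -> admissible c (fun i => vs1 i ++ vs2 i).
Proof.
move=> Hd H1 H2 i; have [S1 F1] := H1 i; have [S2 F2] := H2 i.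
by rewrite size_cat S1 S2 Hd; split => //; apply/List.Forall_app.
Qed.

Lemma admissible_split (c c1 c2 : rterm k) vs : admissible c vs ->
  (forall i, degs i c = degs i c1 + degs i c2) ->
  admissible c1 (fun i => take (degs i c1) (vs i)) /\
  admissible c2 (fun i => drop (degs i c1) (vs i)).
Proof.
move=> H Hd; split=> i; have [S F] := H i; rewrite Hd in S;
  have [St Sd] := size_take_drop_add S;
  by have [Ft Fd] := Forall_take_drop (degs i c1) F.
Qed.

Lemma admissible_rigids (c ct : rterm k) vs :
  rigids c ct -> admissible c vs -> admissible ct vs.
Proof. by move=> H Hvs i; move: (Hvs i); rewrite (degs_rigids i H). Qed.

Lemma taylor_fill_inv (C : term k) t : taylor (fill C V) t ->
  exists c vs, [/\ taylor C c, admissible c vs & fills c vs = t].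
Proof.
elim: C t => [x|i|x C IH|C1 IH1 C2 IH2] t /= H.
- inversion H; subst; exists (RBag (nseq n (RVar x))), (fun _ => nil).
  split; [constructor | | exact: fills_nseq_var].
  by move=> i; rewrite degs_nseq muln0.
- have [l [-> F]] := taylor_value (HV i) H.
  exists (RBag (nseq (size l) (RHole i))), (fun j => if j == i then l else nil).
  split; first by constructor.
    by move=> j; rewrite degs_nseq /=; case: eqP => [->|_]; rewrite ?muln1 ?muln0.
  by rewrite fills_nseq_hole eqxx ?take_size.
- inversion H as [| |x0 M ss Hss|]; subst.
  have [cs [vs [Hcs Hvs E]]] : exists cs vs, [/\ forall c, List.In c cs -> taylor C c,
      admissible (RBag (map (RLam x) cs)) vs & fillsl (map (RLam x) cs) vs = map (RLam x) ss].
    elim: ss {H} Hss => [|s ss IHs] Hss.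
      by exists nil, (fun _ => nil); split => // i; split => //; constructor.
    have [c0 [vs0 [Hc0 Hvs0 <-]]] := IH s (Hss s (or_introl erefl)).
    have [cs [vs1 [Hcs Hvs1 E1]]] := IHs (fun s' Hs' => Hss s' (or_intror Hs')).
    exists (c0 :: cs), (fun i => vs0 i ++ vs1 i); split.
    + by move=> c [<-|Hc]; [exact: Hc0 | exact: Hcs].
    + exact: admissible_cat Hvs0 Hvs1.
    + rewrite /= -E1; apply: fillsl_lam_cat => i.
      by case: (Hvs0 i).
  exists (RBag (map (RLam x) cs)), vs; split => //; first by constructor.
  by rewrite fills_bag E.
- inversion H as [| | |M1 M2 s1 s2 H1 H2]; subst.
  have [c1 [vs1 [Hc1 Hvs1 <-]]] := IH1 _ H1.
  have [c2 [vs2 [Hc2 Hvs2 <-]]] := IH2 _ H2.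
  exists (RApp c1 c2), (fun i => vs1 i ++ vs2 i); split; first by constructor.
    exact: admissible_cat Hvs1 Hvs2.
  by apply: fills_app_cat => i; case: (Hvs1 i).
Qed.

Lemma taylor_fill_rigid (C : term k) c ct vs :
  taylor C c -> rigids c ct -> admissible ct vs ->
  exists t, taylor (fill C V) t /\ reqs (fills ct vs) t.
Proof.
elim: C c ct vs => [x|i|x C IH|C1 IH1 C2 IH2] c ct vs Hc Hct Hvs /=.
- inversion Hc; subst; rewrite (rigids_nseq _ Hct); last by move=> w H; inversion H.
  exists (RBag (nseq n (RVar x))); split; first by constructor.
  by rewrite fills_nseq_var; exact: reqs_refl.
- inversion Hc; subst; rewrite (rigids_nseq _ Hct) in Hvs *; last by move=> w H; inversion H.
  have [S F] := Hvs i; rewrite degs_nseq /= eqxx muln1 in S.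
  by rewrite fills_nseq_hole -S ?take_size //; apply/(inT_bagE _ (HV i)).
- inversion Hc as [| |x0 M ss Hss|]; subst.
  have [ss' [cts [Ps F Ect]]] := rigids_lam_bag Hct; subst ct.
  have {}Hss s : List.In s ss' -> taylor C s.
    by move=> Hs; apply: Hss; exact: Permutation_in (Permutation_sym Ps) Hs.
  have [ts [Hts F']] : exists ts, (forall t, List.In t ts -> taylor (fill C V) t) /\
      List.Forall2 (@reqv 0) (fillsl (map (RLam x) cts) vs) (map (RLam x) ts).
    elim: F vs Hvs {Hc Hct Ps} Hss => [|s ct0 ss'' cts' Hr _ IHl] vs Hvs Hss.
      by exists nil; split => //; constructor.
    have [Hvs0 Hvs1] :=
      admissible_split (c1 := ct0) (c2 := RBag (map (RLam x) cts')) Hvs (fun i => erefl).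
    have [t0 [Ht0 Hr0]] := IH _ _ _ (Hss s (or_introl erefl)) Hr Hvs0.
    have [ts [Hts F']] := IHl _ Hvs1 (fun s' Hs' => Hss s' (or_intror Hs')).
    exists (t0 :: ts); split; first by move=> t [<-|Ht]; [exact: Ht0 | exact: Hts].
    by constructor => //; constructor.
  exists (RBag (map (RLam x) ts)); split; first by constructor.
  by rewrite fills_bag; exact: (reqs_bag (l1 := map (RLam x) ts)).
- inversion Hc as [| | |M1 M2 c1 c2 Hc1 Hc2]; subst.
  inversion Hct as [a1 a2 ct1 ct2 Hr1 Hr2|]; subst.
  have [Hvs1 Hvs2] := admissible_split (c1 := ct1) (c2 := ct2) Hvs (fun i => erefl).
  have [t1 [Ht1 E1]] := IH1 _ _ _ Hc1 Hr1 Hvs1.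
  have [t2 [Ht2 E2]] := IH2 _ _ _ Hc2 Hr2 Hvs2.
  by exists (RApp t1 t2); split; constructor.
Qed.
End FillValues.

Unset Implicit Arguments.

Theorem mainTheorem2 (k : nat) (C : term k) (V : 'I_k -> term 0)
  (HV : forall i, is_value (V i)) :
  forall s : rterm 0,
    inT (fill C V) s <->
    exists (c ct : rterm k) (vs : 'I_k -> list (rval 0)),
      [/\ taylor C c, rigids c ct,
          (forall i, size (vs i) = degs i c /\ inT (V i) (RBag (vs i)))
        & reqs s (fills ct vs)].
Proof.
move=> s; split.
- move=> [t [Ht Hr]]; have [c [vs [Hc Hvs E]]] := taylor_fill_inv HV Ht.
  exists c, c, vs; split; rewrite ?E //; first exact: rigids_refl.
  by move=> i; have [S F] := Hvs i; rewrite (inT_bagE _ (HV i)).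
- move=> [c [ct [vs [Hc Hct Hvs Hr]]]].
  have Hadm : admissible V c vs.
    by move=> i; have [S F] := Hvs i; rewrite -(inT_bagE _ (HV i)).
  have [t [Ht Hr']] := taylor_fill_rigid HV Hc Hct (admissible_rigids Hct Hadm).
  by exists t; split => //; exact: reqs_trans Hr Hr'.
Qed.
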